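(* Let $m\ge3$, let $\lambda=\{\mu_{\mathbf a},\mu_{\mathbf b},\mu_{\mathbf c}\}$ be a D-J class over $P_m$ and $J=(j_1,\dots,j_m)\in\mathbb{Z}_{>0}^m$. Then $$|\tilde E(\lambda,J)|=(2^{|\mu_{\mathbf a}|-1})^{w_{\mathbf a}}+(2^{|\mu_{\mathbf b}|-1})^{w_{\mathbf b}}+(2^{|\mu_{\mathbf c}|-1})^{w_{\mathbf c}}-2,$$ where $w_i=0$ if $\mu_i=\varnothing$ and $w_i=\sum_{k\in\mu_i}(j_k-1)$ otherwise.
   Context: $P_m$ is the simplicial complex on $[m]$ with facets $\{i,i+1\}$ mod $m$. A D-J class over $P_m$ is an unordered weak partition $\lambda=\{\mu_{\mathbf a},\mu_{\mathbf b},\mu_{\mathbf c}\}$ of $[m]$ (parts may be empty) into non-consecutive sets (no part contains $\{i,i+1\bmod m\}$); $p,q$ are $\lambda$-equivalent if they lie in the same part. An e-set compatible with $\lambda$ is $(p,S)$ with $p\in[m]$, $S\subseteq[m]$ of even cardinality, and $\{p\}\cup S$ contained in one part. Two such e-sets $(p,S),(q,T)$ are type 1 $\lambda$-related if $S=\varnothing$ or $T=\varnothing$ or $p,q$ are $\lambda$-equivalent. $\tilde E(\lambda,J)$ is the set of sequences $(1,S^1_1),\dots,(1,S^1_{j_1-1}),(2,S^2_1),\dots,(2,S^2_{j_2-1}),\dots,(m,S^m_1),\dots,(m,S^m_{j_m-1})$ of e-sets compatible with $\lambda$ whose members are pairwise type 1 $\lambda$-related. *)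

(* Vertices [m] = {1,...,m} are modelled by 'I_m = {0,...,m-1};
   consecutive means {i, ordS i} (successor mod m). *)
From mathcomp Require Import all_boot.
Set Implicit Arguments. Unset Strict Implicit. Unset Printing Implicit Defensive.

Definition noncons (m : nat) (A : {set 'I_m}) : bool :=
  [forall i : 'I_m, ~~ ((i \in A) && (ordS i \in A))].

Definition DJ_class (m : nat) (a b c : {set 'I_m}) : bool :=
  [&& [disjoint a & b], [disjoint a & c], [disjoint b & c],
      a :|: b :|: c == [set: 'I_m],
      noncons a, noncons b & noncons c].

Definition lam_equiv (m : nat) (a b c : {set 'I_m}) (p q : 'I_m) : bool :=
  [|| (p \in a) && (q \in a), (p \in b) && (q \in b) | (p \in c) && (q \in c)].

Definition eset_compat (m : nat) (a b c : {set 'I_m}) (e : 'I_m * {set 'I_m}) : bool :=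
  ~~ odd #|e.2| &&
  [|| (e.1 \in a) && (e.2 \subset a), (e.1 \in b) && (e.2 \subset b)
    | (e.1 \in c) && (e.2 \subset c)].

Definition type1_rel (m : nat) (a b c : {set 'I_m}) (e f : 'I_m * {set 'I_m}) : bool :=
  [|| e.2 == set0, f.2 == set0 | lam_equiv a b c e.1 f.1].

Definition Elen (m : nat) (J : 'I_m -> nat) : nat := \sum_(k < m) (J k).-1.

Definition Epattern (m : nat) (J : 'I_m -> nat) : seq 'I_m :=
  flatten [seq nseq (J k).-1 k | k <- enum 'I_m].

Definition in_Etilde (m : nat) (a b c : {set 'I_m}) (J : 'I_m -> nat)
  (s : (Elen J).-tuple ('I_m * {set 'I_m})) : bool :=
  [&& [seq e.1 | e <- s] == Epattern J,
      all (eset_compat a b c) s &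
      pairwise (type1_rel a b c) s].

Definition Etilde (m : nat) (a b c : {set 'I_m}) (J : 'I_m -> nat)
  : {set (Elen J).-tuple ('I_m * {set 'I_m})} :=
  [set s | @in_Etilde m a b c J s].

Definition wpart (m : nat) (J : 'I_m -> nat) (X : {set 'I_m}) : nat :=
  if X == set0 then 0 else \sum_(k in X) (J k).-1.

From mathcomp Require Import all_boot zify.
Set Implicit Arguments. Unset Strict Implicit. Unset Printing Implicit Defensive.

(* An e-set (p, S) with S nonempty pins down the part of p, and type-1 relatedness
   forces all e-sets with nonempty S in one sequence to share that part X. Hence
   E~(lambda, J) is the union, over the three parts X, of the sequences whose e-sets
   carry an even subset of X at positions in X and the empty set elsewhere. There are
   (2^(|X|-1))^(w_X) of these, since a nonempty set has 2^(|X|-1) even subsets, and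
   any two of the three families meet only in the sequence with all sets empty,
   whence the correction -2. *)

Section EvenSubsets.
Variable T : finType.

Definition toggle (x : T) (S : {set T}) : {set T} :=
  if x \in S then S :\ x else x |: S.

Lemma toggleK x : involutive (toggle x).
Proof.
move=> S; rewrite /toggle; case: (boolP (x \in S)) => xS; rewrite !inE eqxx /=.
- by rewrite setD1K.
- by rewrite setU1K.
Qed.

Lemma odd_card_toggle x (S : {set T}) : odd #|toggle x S| = ~~ odd #|S|.
Proof.
rewrite /toggle; case: ifP => xS.
- by rewrite [in RHS](cardsD1 x) xS negbK.
- by rewrite cardsU1 xS.
Qed.

Lemma toggle_subset x (S X : {set T}) : x \in X -> (toggle x S \subset X) = (S \subset X).
Proof.
move=> xX; rewrite /toggle; case: ifP => xS; last by rewrite subUset sub1set xX.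
by rewrite -{2}(setD1K xS) subUset sub1set xX.
Qed.

Lemma card_even_subsets (X : {set T}) :
  #|[set S in powerset X | ~~ odd #|S|]| = 2 ^ (#|X| - 1).
Proof.
have [->|[x xX]] := set_0Vmem X.
  rewrite cards0 (_ : [set S in _ | _] = [set set0]) ?cards1 //.
  by apply/setP=> S; rewrite !inE subset0; case: eqP => // ->; rewrite cards0.
set E := [set S in powerset X | ~~ odd #|S|].
have toggleE : toggle x @: E = powerset X :\: E.
  rewrite (can2_imset_pre _ (toggleK x) (toggleK x)).
  apply/setP=> S; rewrite !inE toggle_subset // odd_card_toggle.
  by case: (S \subset X); rewrite /= ?andbT.
have := cardsID E (powerset X); rewrite -toggleE card_imset; last exact: inv_inj (toggleK x).
rewrite (setIidPr _); last by apply/subsetP=> S; rewrite inE => /andP[].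
have X_gt0 : 0 < #|X| by apply/card_gt0P; exists x.
by rewrite card_powerset -(prednK X_gt0) subSS subn0 expnS; lia.
Qed.

End EvenSubsets.

Lemma cardsU3_common (T : finType) (A B C Z : {set T}) :
  A :&: B = Z -> A :&: C = Z -> B :&: C = Z ->
  #|A :|: B :|: C| + 2 * #|Z| = #|A| + #|B| + #|C|.
Proof.
move=> eqAB eqAC eqBC; have := cardsUI (A :|: B) C; rewrite setIUl eqAC eqBC setUid.
by have := cardsUI A B; rewrite eqAB; lia.
Qed.

Lemma card_tuple_family (T : finType) n (F : 'I_n -> {set T}) :
  #|[set s : n.-tuple T | [forall i, tnth s i \in F i]]| = \prod_(i < n) #|F i|.
Proof.
rewrite -(cardsXn F).
have tuple_inj : injective (fun f : {dffun forall i : 'I_n, T} => [tuple f i | i < n]).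
  move=> f g /= fg; apply/ffunP => i.
  by rewrite -[f i](tnth_mktuple f) -[g i](tnth_mktuple g) fg.
rewrite -(card_imset _ tuple_inj); apply: eq_card => s; rewrite !inE.
apply/forallP/imsetP => [sF | [f /setXnP fF ->] i]; last by rewrite tnth_mktuple.
exists [ffun i => tnth s i]; first by apply/setXnP => i; rewrite ffunE.
by apply: eq_from_tnth => i; rewrite tnth_mktuple ffunE.
Qed.

Lemma card_tuple_fst (T U : finType) n (p : n.-tuple T) (F : T -> {set U}) :
  #|[set s : n.-tuple (T * U)
       | ([seq e.1 | e <- s] == p) && all (fun e => e.2 \in F e.1) s]|
  = \prod_(x <- p) #|F x|.
Proof.
pose G (i : 'I_n) := pair (tnth p i) @: F (tnth p i).
rewrite big_tuple (eq_bigr (fun i => #|G i|)) => [|i _]; last first.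
  by rewrite card_imset // => x y [].
rewrite -card_tuple_family; apply: eq_card => s; rewrite !inE.
have -> : ([seq e.1 | e <- s] == p) = ([tuple of map fst s] == p) by rewrite -val_eqE.
apply/andP/forallP => [[/eqP sp /all_tnthP sF] i | sG].
  have si : (tnth s i).1 = tnth p i by rewrite -sp tnth_map.
  apply/imsetP; exists (tnth s i).2; first by rewrite -si; apply: sF.
  by rewrite -si; case: (tnth s i).
split; first by apply/eqP/eq_from_tnth => i; rewrite tnth_map; case/imsetP: (sG i) => ? _ ->.
by apply/all_tnthP => i; case/imsetP: (sG i) => ? ? ->.
Qed.

Definition eset_on (T : finType) (X : {set T}) (e : T * {set T}) : bool :=
  if e.1 \in X then (e.2 \subset X) && ~~ odd #|e.2| else e.2 == set0.

Lemma eset_on_set0 (T : finType) (X : {set T}) e : e.2 = set0 -> eset_on X e.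
Proof. by rewrite /eset_on => ->; rewrite sub0set cards0 eqxx; case: ifP. Qed.

Lemma eset_onI (T : finType) (X Y : {set T}) e :
  [disjoint X & Y] -> eset_on X e -> eset_on Y e -> e.2 = set0.
Proof.
rewrite /eset_on => XY; case: ifP => [eX _|_ /eqP //].
by rewrite (disjointFr XY eX) => /eqP.
Qed.

Section Partition.
Variables (m : nat) (a b c : {set 'I_m}).
Hypotheses (ab : [disjoint a & b]) (ac : [disjoint a & c]) (bc : [disjoint b & c]).
Hypothesis abc : a :|: b :|: c = [set: 'I_m].

Definition part (p : 'I_m) : {set 'I_m} := if p \in a then a else if p \in b then b else c.

Lemma mem_part p : p \in part p.
Proof.
rewrite /part; case: ifP => // pa; case: ifP => // pb.
by have := in_setT p; rewrite -abc !inE pa pb.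
Qed.

Lemma part_in p : part p \in [:: a; b; c].
Proof. by rewrite /part !inE; case: ifP; rewrite ?eqxx //; case: ifP; rewrite !eqxx ?orbT. Qed.

Lemma part_eq X p : X \in [:: a; b; c] -> p \in X -> part p = X.
Proof.
rewrite /part !inE => /or3P[] /eqP -> pX; first by rewrite pX.
  by rewrite (disjointFl ab pX) pX.
by rewrite (disjointFl ac pX) (disjointFl bc pX).
Qed.

Lemma lam_equivE p q : lam_equiv a b c p q = (part p == part q).
Proof.
apply/idP/eqP => [|pq].
  by case/or3P=> /andP[pX qX]; rewrite (part_eq _ pX) ?(part_eq _ qX) // !inE eqxx ?orbT.
have := part_in p; rewrite /lam_equiv !inE.
by case/or3P=> /eqP pX; have := mem_part p; have := mem_part q;
  rewrite -pq pX => -> ->; rewrite ?orbT.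
Qed.

Lemma eset_compatE e : eset_compat a b c e = ~~ odd #|e.2| && (e.2 \subset part e.1).
Proof.
rewrite /eset_compat; congr andb; have := mem_part e.1.
have := part_in e.1; rewrite !inE => /or3P[] /eqP -> eX; rewrite eX /=.
- by rewrite (disjointFr ab eX) (disjointFr ac eX) orbF.
- by rewrite (disjointFl ab eX) (disjointFr bc eX) orbF.
- by rewrite (disjointFl ac eX) (disjointFl bc eX).
Qed.

Lemma type1_rel_refl : reflexive (type1_rel a b c).
Proof. by move=> e; rewrite /type1_rel lam_equivE eqxx !orbT. Qed.

Lemma type1_rel_sym : symmetric (type1_rel a b c).
Proof. by move=> e f; rewrite /type1_rel !lam_equivE [part f.1 == _]eq_sym orbCA. Qed.

Lemma all_compat_pairwiseE (s : seq ('I_m * {set 'I_m})) :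
  all (eset_compat a b c) s && pairwise (type1_rel a b c) s
  = has (fun X => all (eset_on X) s) [:: a; b; c].
Proof.
rewrite (pairwise_all2rel type1_rel_refl type1_rel_sym); apply/andP/hasP.
  case=> /allP compat /allrelP rel.
  have [s0 | /allPn[e0 e0s e0ne]] := boolP (all (fun e => e.2 == set0) s).
    exists a; first exact: mem_head.
    by apply: sub_all s0 => e /eqP; apply: eset_on_set0.
  exists (part e0.1); first exact: part_in.
  apply/allP => e es; have [/eset_on_set0 // | ene] := eqVneq e.2 set0.
  have /eqP pe : part e.1 == part e0.1.
    by have := rel e e0 es e0s; rewrite /type1_rel (negbTE ene) (negbTE e0ne) lam_equivE.
  by have := compat e es; rewrite eset_compatE /eset_on -pe mem_part andbC.
case=> X Xabc /allP sX; split.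
  apply/allP => e /sX; rewrite eset_compatE /eset_on.
  by case: ifP => [/(part_eq Xabc) -> /andP[-> ->] | _ /eqP ->]; rewrite ?cards0 ?sub0set.
apply/allrelP => e f /sX + /sX; rewrite /type1_rel /eset_on lam_equivE.
case: ifP => [/(part_eq Xabc) -> _ | _ ->] //.
by case: ifP => [/(part_eq Xabc) -> _ | _ ->]; rewrite ?eqxx ?orbT.
Qed.

End Partition.

Section Pattern.
Variables (m : nat) (J : 'I_m -> nat).

Lemma size_Epattern : size (Epattern J) == Elen J.
Proof.
rewrite /Epattern size_flatten /shape -map_comp sumnE big_map big_enum /=.
by apply/eqP/eq_bigr => k _; rewrite size_nseq.
Qed.

Lemma count_Epattern (X : {set 'I_m}) : count (mem X) (Epattern J) = wpart J X.
Proof.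
rewrite /Epattern /wpart count_flatten -map_comp sumnE big_map big_enum /=.
case: eqP => [-> | _]; last first.
  rewrite [RHS]big_mkcond; apply: eq_bigr => k _.
  by rewrite count_nseq /=; case: (k \in X); rewrite ?mul1n ?mul0n.
by rewrite big1 // => k _; rewrite count_nseq /= inE.
Qed.

Definition Etilde_on (X : {set 'I_m}) : {set (Elen J).-tuple ('I_m * {set 'I_m})} :=
  [set s : (Elen J).-tuple _ | ([seq e.1 | e <- s] == Epattern J) && all (eset_on X) s].

Lemma card_Etilde_on (X : {set 'I_m}) : #|Etilde_on X| = (2 ^ (#|X| - 1)) ^ wpart J X.
Proof.
pose F p : {set {set 'I_m}} :=
  if p \in X then [set S in powerset X | ~~ odd #|S|] else [set set0].
have -> : Etilde_on X = [set s : (Elen J).-tuple _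
    | ([seq e.1 | e <- s] == Tuple size_Epattern) && all (fun e => e.2 \in F e.1) s].
  apply/setP => s; rewrite !inE; congr andb; apply: eq_all => e.
  by rewrite /eset_on /F; case: ifP; rewrite !inE.
rewrite card_tuple_fst /= -count_Epattern -iter_muln_1 -big_const_seq [RHS]big_mkcond.
by apply: eq_bigr => p _; rewrite /F /=; case: (p \in X); rewrite ?card_even_subsets ?cards1.
Qed.

Lemma Etilde_onI (X Y : {set 'I_m}) :
  [disjoint X & Y] -> Etilde_on X :&: Etilde_on Y = Etilde_on set0.
Proof.
move=> XY; apply/setP => s; rewrite !inE andbACA andbb.
case: (_ == _) => //=; apply/andP/allP => [[/allP sX /allP sY] e es | s0].
  by rewrite /eset_on inE (eset_onI XY (sX e es) (sY e es)).
by split; apply/allP => e /s0; rewrite /eset_on inE => /eqP; apply: eset_on_set0.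
Qed.

End Pattern.

Theorem proposition6 (m : nat) (hm : 3 <= m) (a b c : {set 'I_m})
  (hlam : DJ_class a b c) (J : 'I_m -> nat) (hJ : forall k, 0 < J k) :
  #|Etilde a b c J| =
    (2 ^ (#|a| - 1)) ^ (wpart J a) + (2 ^ (#|b| - 1)) ^ (wpart J b)
    + (2 ^ (#|c| - 1)) ^ (wpart J c) - 2.
Proof.
case/and4P: hlam => ab ac bc /andP[/eqP abc _].
have -> : Etilde a b c J = Etilde_on J a :|: Etilde_on J b :|: Etilde_on J c.
  apply/setP => s; rewrite !inE /in_Etilde.
  case: (_ == _) => //=.
  by rewrite (all_compat_pairwiseE ab ac bc abc) /= orbF orbA.
have := cardsU3_common (Etilde_onI J ab) (Etilde_onI J ac) (Etilde_onI J bc).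
by rewrite !card_Etilde_on cards0 sub0n expn0 exp1n => <-; rewrite addnK.
Qed.
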